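(* Let $\alpha \in [0, 1/10)$, let $G$ be an abelian group, let $A$ be a non-empty finite subset of $G$, and let $H$ be a finite subgroup of $G$. If $d(U_A, U_H) \le \alpha$, then there exists $x \in G$ such that \[|A \,\Delta\, (H + \{x\})| \le 10\, \alpha\, |H|.\]
   Context: $\log$ is the natural logarithm. For a random variable $X$ with finite range $R$, $\mathbb{H}(X) = -\sum_{x\in R}\mathbb{P}(X=x)\log \mathbb{P}(X=x)$ is its Shannon entropy. For a non-empty finite set $A$, $U_A$ denotes a random variable uniformly distributed on $A$. For random variables $X,Y$ with finite range in an abelian group, the entropic Ruzsa distance is $d(X,Y) = \mathbb{H}(X'+Y') - (\mathbb{H}(X')+\mathbb{H}(Y'))/2$, where $X',Y'$ are independent with the same distributions as $X,Y$ respectively. $\Delta$ denotes symmetric difference and $H+\{x\}=\{h+x: h\in H\}$. *)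

From HB Require Import structures.
From mathcomp Require Import all_boot all_order all_algebra.
From mathcomp Require Import finmap.
From mathcomp Require Import reals exp.
Set Implicit Arguments. Unset Strict Implicit. Unset Printing Implicit Defensive.
Import Order.TTheory GRing.Theory Num.Theory.
Local Open Scope fset_scope.
Local Open Scope ring_scope.

Section Defs.
Variables (R : realType) (G : zmodType).

Definition is_subgroup (H : {fset G}) : Prop :=
  0 \in H /\ (forall x y, x \in H -> y \in H -> x - y \in H).

(* Shannon entropy (natural log) of a random variable with finite range S and
   probability mass function p : G -> R (p x = P(X = x)). *)
Definition entropy (S : {fset G}) (p : G -> R) : R :=
  - \sum_(x <- S) p x * ln (p x).

Definition unif (A : {fset G}) (x : G) : R :=
  if x \in A then (#|` A |%:R)^-1 else 0.

Definition sumset (S T : {fset G}) : {fset G} := [fset a + b | a in S, b in T].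

(* distribution of X' + Y' for independent X' (range S, pmf p), Y' (range T, pmf q) *)
Definition conv (S : {fset G}) (p : G -> R) (T : {fset G}) (q : G -> R) (s : G) : R :=
  \sum_(a <- S) \sum_(b <- T) (if a + b == s then p a * q b else 0).

Definition ruzsa_dist (S : {fset G}) (p : G -> R) (T : {fset G}) (q : G -> R) : R :=
  entropy (sumset S T) (conv S p T q) - (entropy S p + entropy T q) / 2.

Definition translate (H : {fset G}) (x : G) : {fset G} := [fset h + x | h in H].

Definition symdiff (A B : {fset G}) : {fset G} := (A `\` B) `|` (B `\` A).

End Defs.

From HB Require Import structures.
From mathcomp Require Import all_boot all_order all_algebra.
From mathcomp Require Import finmap.
From mathcomp Require Import reals exp.
From mathcomp Require Import lra.
Set Implicit Arguments. Unset Strict Implicit. Unset Printing Implicit Defensive.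
Import Order.TTheory GRing.Theory Num.Theory.
Local Open Scope fset_scope.
Local Open Scope ring_scope.

(* The mass of U_A + U_H at s is |A ∩ (H + s)| / (|A| |H|).  If m is the largest
   such overlap, every mass is at most m / (|A| |H|), so the entropy of U_A + U_H is
   at least ln (|A| |H| / m) and d(U_A, U_H) >= ln (|A| |H| / m^2) / 2; hence
   m^2 / (|A| |H|) >= 1 - 2 alpha.  For x maximising the overlap,
   |A Δ (H + x)| = |A| + |H| - 2 m, which is at most 10 alpha |H| once alpha < 1/10. *)

Lemma sum_pred1_seq (V : nmodType) (T : eqType) (r : seq T) (x : T) (f : T -> V) :
  uniq r -> \sum_(s <- r) (if x == s then f s else 0) = if x \in r then f x else 0.
Proof.
elim: r => [|y r IH]; first by rewrite big_nil.
rewrite big_cons /= in_cons => /andP [yr ur]; rewrite IH //.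
case: eqP => [->|_] /=; last by rewrite add0r.
by rewrite (negbTE yr) addr0.
Qed.

Lemma sumr_const_fset (V : nmodType) (K : choiceType) (A : {fset K}) (c : V) :
  \sum_(x <- A) c = c *+ #|` A|.
Proof. by rewrite big_const_seq count_predT iter_addr_0. Qed.

Lemma card_symdiff (G : zmodType) (A B : {fset G}) :
  #|` symdiff A B| = ((#|` A| - #|` A `&` B|) + (#|` B| - #|` A `&` B|))%N.
Proof.
have disjD : (A `\` B) `&` (B `\` A) = fset0.
  by apply/fsetP => x; rewrite !inE; case: (x \in A); case: (x \in B).
by rewrite /symdiff -(addn0 #|` _|) -(cardfs0 G) -disjD cardfsUI !cardfsD fsetIC.
Qed.

Section RealBounds.
Variable R : realType.

Lemma le_1subV_ln (t : R) : 0 < t -> 1 - t^-1 <= ln t.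
Proof.
move=> t0; have tV0 : 0 < t^-1 by rewrite invr_gt0.
have : -1 < t^-1 - 1 by lra.
by move/le_ln1Dx; rewrite addrCA subrr addr0 lnV ?posrE //; lra.
Qed.

(* The bound [1 - m^2/(a h) <= 2 al] with [al < 1/10] first forces [4 a <= 5 m];
   then [m (a + h - 2 m) <= a h - m^2] turns it into the claim. *)
Lemma overlap_ratio_bound (a h m al : R) : 0 < m -> m <= a -> m <= h ->
  0 <= al -> al < 10^-1 -> 1 - (m * m) / (a * h) <= 2 * al ->
  a + h - 2 * m <= 10 * al * h.
Proof.
move=> m0 ma mh al0 al1 hyp.
have ah0 : 0 < a * h by apply: mulr_gt0; apply: lt_le_trans m0 _.
have {}hyp : a * h - m * m <= 2 * al * (a * h).
  by move: hyp; rewrite -(ler_pM2r ah0) mulrBl mul1r mulfVK ?gt_eqF.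
have {}al1 : al * 10 < 1 by move: al1; rewrite -(ltr_pM2r (_ : (0:R) < 10)) ?mulVf //; lra.
have key : m * (a + h - 2 * m) <= a * h - m * m by nra.
have a_le : 4 * a <= 5 * m by nra.
nra.
Qed.

End RealBounds.

Section Entropy.
Variables (R : realType) (G : zmodType).

Lemma sum_unif (A : {fset G}) : A != fset0 -> \sum_(x <- A) unif R A x = 1.
Proof.
move=> An0; rewrite (eq_big_seq (fun _ => (#|` A|%:R : R)^-1)); last first.
  by move=> x xA; rewrite /unif xA.
by rewrite sumr_const_fset -[_ *+ _]mulr_natr mulVf // pnatr_eq0 -lt0n cardfs_gt0.
Qed.

Lemma entropy_unif (A : {fset G}) : A != fset0 ->
  entropy A (unif R A) = ln (#|` A|%:R).
Proof.
move=> An0; have A0 : (0 : R) < #|` A|%:R by rewrite ltr0n cardfs_gt0.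
rewrite /entropy (eq_big_seq (fun x => unif R A x * ln ((#|` A|%:R)^-1))); last first.
  by move=> x xA; rewrite /unif xA.
by rewrite -mulr_suml sum_unif // mul1r lnV ?opprK.
Qed.

Lemma sum_conv (S T : {fset G}) (p q : G -> R) :
  \sum_(s <- sumset S T) conv S p T q s =
  (\sum_(a <- S) p a) * (\sum_(b <- T) q b).
Proof.
rewrite /conv exchange_big mulr_suml; apply: eq_big_seq => a aS.
rewrite exchange_big mulr_sumr; apply: eq_big_seq => b bT.
by rewrite sum_pred1_seq ?fset_uniq // in_imfset2.
Qed.

Lemma entropy_ge_lnV (S : {fset G}) (p : G -> R) (c : R) :
  (forall x, x \in S -> 0 <= p x <= c) -> \sum_(x <- S) p x = 1 ->
  - ln c <= entropy S p.
Proof.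
move=> pc p1; rewrite /entropy -[X in X <= _]mul1r -p1 mulr_suml -sumrN !big_seq.
apply: ler_sum => x xS; have /andP[p0 pxc] := pc x xS.
rewrite -mulrN; move: p0; rewrite le0r; case/orP => [/eqP->|px_pos]; first by rewrite !mul0r.
rewrite ler_pM2l // lerN2 ler_ln ?posrE //; exact: lt_le_trans pxc.
Qed.

End Entropy.

Section Translates.
Variables (R : realType) (G : zmodType).

Lemma mem_translate (H : {fset G}) s x : (x \in translate H s) = (x - s \in H).
Proof.
apply/imfsetP/idP => /= [[h hH ->]|xsH]; first by rewrite addrK.
by exists (x - s); rewrite ?subrK.
Qed.

Lemma card_translate (H : {fset G}) s : #|` translate H s| = #|` H|.
Proof. by rewrite card_imfset //= => x y; apply: addIr. Qed.

Lemma subgroup_memBC (H : {fset G}) x y : is_subgroup H ->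
  (x - y \in H) = (y - x \in H).
Proof.
move=> [H0 HB]; suff imp u v : u - v \in H -> v - u \in H by apply/idP/idP; apply: imp.
by move=> uvH; rewrite -opprB -sub0r HB.
Qed.

Lemma conv_unif (A H : {fset G}) s : is_subgroup H ->
  conv A (unif R A) H (unif R H) s =
  #|` A `&` translate H s|%:R / (#|` A|%:R * #|` H|%:R).
Proof.
move=> Hsub; rewrite /conv.
set k : R := (#|` A|%:R)^-1 * (#|` H|%:R)^-1.
rewrite (eq_big_seq (fun a => if a \in translate H s then k else 0)); last first.
  move=> a aA; rewrite (eq_big_seq (fun b => if s - a == b then k else 0)).
    by rewrite sum_pred1_seq ?fset_uniq // mem_translate subgroup_memBC.
  by move=> b bH; rewrite /unif aA bH subr_eq addrC eq_sym.
rewrite -big_mkcond /= big_fset_condE sumr_const_fset -[_ *+ _]mulr_natr invfM mulrC.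
by congr (_%:R * _); congr #|` _|; apply/fsetP => x; rewrite !inE.
Qed.

Lemma ruzsa_unif_ge (A H : {fset G}) (m : nat) :
  is_subgroup H -> A != fset0 -> (0 < m)%N ->
  (forall s, s \in sumset A H -> (#|` A `&` translate H s| <= m)%N) ->
  ln (#|` A|%:R * #|` H|%:R / (m%:R * m%:R)) / 2 <= ruzsa_dist A (unif R A) H (unif R H).
Proof.
move=> Hsub An0 m0 mmax.
have Hn0 : H != fset0 by apply/fset0Pn; exists 0; case: Hsub.
have [a0 h0 mr0] : [/\ (0 : R) < #|` A|%:R, (0 : R) < #|` H|%:R & (0 : R) < m%:R].
  by rewrite !ltr0n !cardfs_gt0.
have ent : - ln (m%:R / (#|` A|%:R * #|` H|%:R))
           <= entropy (sumset A H) (conv A (unif R A) H (unif R H)).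
  apply: entropy_ge_lnV; last by rewrite sum_conv !sum_unif ?mulr1.
  move=> s sS; rewrite conv_unif // divr_ge0 ?mulr_ge0 //=.
  by rewrite ler_pM2r ?invr_gt0 ?mulr_gt0 // ler_nat mmax.
move: ent; rewrite /ruzsa_dist !entropy_unif // !ln_div ?posrE ?mulr_gt0 // !lnM ?posrE //.
lra.
Qed.

End Translates.

Theorem mainTheorem3 (R : realType) (G : zmodType) (alpha : R)
    (A H : {fset G}) :
  0 <= alpha -> alpha < 10^-1 ->
  A != fset0 ->
  is_subgroup H ->
  ruzsa_dist A (unif R A) H (unif R H) <= alpha ->
  exists x : G,
    (#|` symdiff A (translate H x) |)%:R <= 10 * alpha * (#|` H |)%:R.
Proof.
move=> al0 al1 An0 Hsub dist_le.
have /fset0Pn [a0 a0A] := An0.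
have a0S : a0 + 0 \in sumset A H by rewrite in_imfset2 //; case: Hsub.
pose overlap s := #|` A `&` translate H s|.
have [[s sS] _ smax] := @arg_maxnP _ [` a0S] xpredT (fun s => overlap (val s)) isT.
exists s; set m := overlap s.
have mmax t : t \in sumset A H -> (overlap t <= m)%N by move=> tS; apply: (smax [` tS]).
have m0 : (0 < m)%N.
  apply: leq_trans (mmax _ a0S); rewrite cardfs_gt0; apply/fset0Pn; exists a0.
  by rewrite in_fsetI a0A mem_translate addr0 subrr; case: Hsub.
have mA : (m <= #|` A|)%N by rewrite fsubset_leq_card ?fsubsetIl.
have mH : (m <= #|` H|)%N by rewrite -(card_translate H s) fsubset_leq_card ?fsubsetIr.
have := ruzsa_unif_ge R Hsub An0 m0 mmax.
set r := _ / (_ * _) => ln_le.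
have r0 : 0 < r by rewrite divr_gt0 ?mulr_gt0 ?ltr0n ?cardfs_gt0 // -cardfs_gt0 (leq_trans m0).
have ratio_le : 1 - (m%:R * m%:R) / (#|` A|%:R * #|` H|%:R) <= 2 * alpha.
  by have := le_1subV_ln r0; rewrite /r invf_div; lra.
have := @overlap_ratio_bound R #|` A|%:R #|` H|%:R m%:R alpha.
rewrite ltr0n !ler_nat m0 mA mH => /(_ isT isT isT al0 al1 ratio_le).
by rewrite card_symdiff card_translate natrD !natrB ?ler_nat //; lra.
Qed.
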